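(* Let $f\colon K\to R$ be a right t-unital homomorphism of (nonunital) rings. Then (a) a right $R$-module is t-unital as an $R$-module if and only if it is t-unital as a $K$-module; (b) a left $R$-module is c-unital as an $R$-module if and only if it is c-unital as a $K$-module.
   Context: Rings are associative, not necessarily unital; modules are not assumed unital; $R$-modules are regarded as $K$-modules via $f$. A right module $N$ over a ring $S$ is t-unital if $N\otimes_S S\to N$, $n\otimes s\mapsto ns$, is an isomorphism; a left $S$-module $P$ is c-unital if $P\to\mathrm{Hom}_S(S,P)$, $p\mapsto(s\mapsto sp)$, is an isomorphism. The homomorphism $f$ is right t-unital if $R$, as a right $K$-module via $f$, is t-unital. *)

From HB Require Import structures.
From mathcomp Require Import all_boot all_algebra.
Set Implicit Arguments. Unset Strict Implicit. Unset Printing Implicit Defensive.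
Import GRing.Theory.
Local Open Scope ring_scope.

Record nuRing := NuRing {
  nur_car :> zmodType;
  nur_mul : nur_car -> nur_car -> nur_car;
  nur_mulA : forall x y z, nur_mul x (nur_mul y z) = nur_mul (nur_mul x y) z;
  nur_mulDl : forall x y z, nur_mul (x + y) z = nur_mul x z + nur_mul y z;
  nur_mulDr : forall x y z, nur_mul x (y + z) = nur_mul x y + nur_mul x z }.
Arguments nur_mul : clear implicits.

Definition is_nuhom (K R : nuRing) (f : K -> R) : Prop :=
  (forall x y, f (x + y) = f x + f y) /\
  (forall x y, f (nur_mul K x y) = nur_mul R (f x) (f y)).

Definition is_additive (M A : zmodType) (g : M -> A) : Prop :=
  forall x y, g (x + y) = g x + g y.

Definition is_rmod (S : nuRing) (N : zmodType) (act : N -> S -> N) : Prop :=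
  [/\ forall n m s, act (n + m) s = act n s + act m s,
      forall n s t, act n (s + t) = act n s + act n t
    & forall n s t, act (act n s) t = act n (nur_mul S s t)].

Definition is_lmod (S : nuRing) (P : zmodType) (act : S -> P -> P) : Prop :=
  [/\ forall s p q, act s (p + q) = act s p + act s q,
      forall s t p, act (s + t) p = act s p + act t p
    & forall s t p, act s (act t p) = act (nur_mul S s t) p].

Definition balanced (S : nuRing) (N : zmodType) (act : N -> S -> N)
    (A : zmodType) (b : N -> S -> A) : Prop :=
  [/\ forall n m s, b (n + m) s = b n s + b m s,
      forall n s t, b n (s + t) = b n s + b n t
    & forall n s t, b (act n s) t = b n (nur_mul S s t)].

(* t-unitality: the canonical map N (x)_S S -> N, n (x) s |-> n s, is an
   isomorphism.  Equivalently (by the defining universal property of the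
   tensor product N (x)_S S), the balanced map (n, s) |-> n s is universal:
   every S-balanced biadditive map b : N x S -> A factors uniquely through
   it via an additive map N -> A. *)
Definition tunital (S : nuRing) (N : zmodType) (act : N -> S -> N) : Prop :=
  forall (A : zmodType) (b : N -> S -> A), balanced act b ->
    exists g : N -> A,
      [/\ is_additive g,
          (forall n s, g (act n s) = b n s)
        & forall g' : N -> A, is_additive g' ->
            (forall n s, g' (act n s) = b n s) -> forall n, g' n = g n].

Definition is_lhom (S : nuRing) (P : zmodType) (act : S -> P -> P)
    (g : S -> P) : Prop :=
  is_additive g /\ forall s t, g (nur_mul S s t) = act s (g t).

(* c-unitality: p |-> (s |-> s p) is a bijection P -> Hom_S(S, P)
   (its values always lie in Hom_S(S,P) for a module P). *)
Definition cunital (S : nuRing) (P : zmodType) (act : S -> P -> P) : Prop :=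
  (forall p q, (forall s, act s p = act s q) -> p = q) /\
  (forall g : S -> P, is_lhom act g -> exists p, forall s, g s = act s p).

(** t-unitality of [N] over [S] amounts to two facts: [N] is generated by
   the products [n s] (additive maps agreeing on them agree), and every
   balanced map factors through the action.  Since [R] is generated by the
   products [r * f k], an additive map out of [R], or out of [N] through
   [r |-> n r], is determined by its values there; so every identity needed
   over [R] can be checked on [K]-products, and a [K]-balanced map [b] lifts
   to the [R]-balanced map [(n, r * f k) |-> b (n r) k].  For c-unitality the
   same principle applies to [r |-> r p] and to [R]-linear maps [R -> P]; a
   [K]-linear [g : K -> P] extends to [R] by factoring [(r, k) |-> r g(k)]
   through [R (x)_K K = R]. *)
From mathcomp Require Import all_boot all_algebra.
From Stdlib Require Import ClassicalEpsilon.
Set Implicit Arguments. Unset Strict Implicit. Unset Printing Implicit Defensive.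
Import GRing.Theory.
Local Open Scope ring_scope.

Definition act_generates (S : nuRing) (N : zmodType) (act : N -> S -> N) :=
  forall (A : zmodType) (g h : N -> A), is_additive g -> is_additive h ->
    (forall n s, g (act n s) = h (act n s)) -> forall n, g n = h n.

Section Tunital.
Variables (S : nuRing) (N : zmodType) (act : N -> S -> N).

Lemma tunital_generates : tunital act -> act_generates act.
Proof.
move=> T A g h gA hA ghE n; apply: subr0_eq.
have bal0 : balanced act (fun _ _ => 0 : A) by split=> *; rewrite ?addr0.
have [g0 [_ _ g0U]] := T A _ bal0.
have add0 : is_additive (fun _ : N => 0 : A) by move=> *; rewrite addr0.
rewrite (g0U (fun x => g x - h x)) => [|x y|m s]; last by rewrite ghE subrr.
- by rewrite -(g0U _ add0).
- by rewrite gA hA opprD addrACA.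
Qed.

Lemma tunital_intro : act_generates act ->
  (forall (A : zmodType) (b : N -> S -> A), balanced act b ->
     exists2 g : N -> A, is_additive g & forall n s, g (act n s) = b n s) ->
  tunital act.
Proof.
move=> gen fact A b bal; have [g gA gE] := fact A b bal.
by exists g; split=> // g' g'A g'E; apply: gen => // n s; rewrite g'E gE.
Qed.

Lemma tunital_factor (A : zmodType) (b : N -> S -> A) :
  tunital act -> balanced act b ->
  {g : N -> A | is_additive g & forall n s, g (act n s) = b n s}.
Proof.
by move=> T /T /constructive_indefinite_description [g [gA gE _]]; exists g.
Qed.

End Tunital.

Section RightTunital.
Variables (K R : nuRing) (f : K -> R).
Hypotheses (fD : forall x y, f (x + y) = f x + f y)
           (fM : forall x y, f (nur_mul K x y) = nur_mul R (f x) (f y)).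
Hypothesis tunital_f : tunital (fun (r : R) (k : K) => nur_mul R r (f k)).

Let genR := tunital_generates tunital_f.

Section RightModule.
Variables (N : zmodType) (act : N -> R -> N).
Hypothesis actDl : forall n m r, act (n + m) r = act n r + act m r.
Hypothesis actDr : forall n r s, act n (r + s) = act n r + act n s.
Hypothesis actA : forall n r s, act (act n r) s = act n (nur_mul R r s).

Let actK n k := act n (f k).

Lemma act_generates_restrict : act_generates act -> act_generates actK.
Proof.
move=> gen A g h gA hA ghE; apply: gen => // n.
apply: (genR (g := fun r => g (act n r)) (h := fun r => h (act n r))).
- by move=> r s; rewrite actDr gA.
- by move=> r s; rewrite actDr hA.
- by move=> r k; rewrite -actA; apply: ghE.
Qed.

Lemma balanced_lift (A : zmodType) (b : N -> K -> A) : balanced actK b ->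
  exists2 h : N -> R -> A, balanced act h &
    forall n r k, h n (nur_mul R r (f k)) = b (act n r) k.
Proof.
move=> [bDl bDr bA].
have balR n :
    balanced (fun r k => nur_mul R r (f k)) (fun r k => b (act n r) k).
  split=> [r s k|r k l|r k l]; first by rewrite actDr bDl.
    by rewrite bDr.
  by rewrite -actA bA.
pose h n := s2val (tunital_factor tunital_f (balR n)).
have hA n : is_additive (h n) by rewrite /h; case: tunital_factor.
have hE n r k : h n (nur_mul R r (f k)) = b (act n r) k.
  by rewrite /h; case: tunital_factor.
exists h => //; split=> [n m r|n r s|n r s].
- apply: (genR (g := h (n + m)) (h := fun s => h n s + h m s)).
  + exact: hA.
  + by move=> x y; rewrite !hA addrACA.
  + by move=> s k; rewrite !hE actDl bDl.
- exact: hA.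
- apply: (genR (g := h (act n r)) (h := fun s => h n (nur_mul R r s))) => //.
    by move=> x y; rewrite nur_mulDr hA.
  by move=> t k; rewrite nur_mulA !hE actA.
Qed.

Lemma tunital_restrict : tunital act -> tunital actK.
Proof.
move=> T; apply: tunital_intro.
  exact/act_generates_restrict/tunital_generates.
move=> A b balb; have [h balh hE] := balanced_lift balb.
have [g [gA gE _]] := T A h balh; case: balb => bDl _ _.
exists g => // n k.
apply: (tunital_generates T (g := fun m => g (actK m k)) (h := b^~ k)).
- by move=> x y; rewrite /actK actDl gA.
- by move=> x y; rewrite bDl.
- by move=> m r; rewrite /actK actA gE hE.
Qed.

Lemma tunital_extend : tunital actK -> tunital act.
Proof.
move=> T; apply: tunital_intro.
  move=> A g h gA hA ghE; apply: (tunital_generates T) => // n k; exact: ghE.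
move=> A b [bDl bDr bA].
have balK : balanced actK (fun n k => b n (f k)).
  by split=> *; rewrite ?bDl ?fD ?bDr ?bA ?fM.
have [g gA gE] := tunital_factor T balK.
exists g => // n; apply: (genR (g := fun r => g (act n r))).
- by move=> r s; rewrite actDr gA.
- by move=> r s; rewrite bDr.
- by move=> r k; rewrite -actA gE bA.
Qed.

End RightModule.

Section LeftModule.
Variables (P : zmodType) (act : R -> P -> P).
Hypothesis actDr : forall r p q, act r (p + q) = act r p + act r q.
Hypothesis actDl : forall r s p, act (r + s) p = act r p + act s p.
Hypothesis actA : forall r s p, act r (act s p) = act (nur_mul R r s) p.

Let actK k p := act (f k) p.

Lemma act_eq_restrict p q :
  (forall k, act (f k) p = act (f k) q) -> forall r, act r p = act r q.
Proof.
move=> pqE; apply: (genR (g := act^~ p) (h := act^~ q)) => // r k.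
by rewrite -!actA pqE.
Qed.

Lemma lhom_eq_restrict (A B : R -> P) : is_lhom act A -> is_lhom act B ->
  (forall k, A (f k) = B (f k)) -> forall r, A r = B r.
Proof.
move=> [AD AM] [BD BM] ABE; apply: genR => // r k.
by rewrite AM BM ABE.
Qed.

Lemma cunital_restrict : cunital act -> cunital actK.
Proof.
move=> [inj surj]; split=> [p q /act_eq_restrict /inj //|g [gD gM]].
have bal : balanced (fun r k => nur_mul R r (f k)) (fun r k => act r (g k)).
  by split=> *; rewrite ?actDl ?gD ?actDr ?gM ?actA.
have [G [GD GE _]] := tunital_f bal.
have GM s t : G (nur_mul R s t) = act s (G t).
  apply: (genR (g := fun t => G (nur_mul R s t)) (h := fun t => act s (G t))).
  - by move=> x y; rewrite nur_mulDr GD.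
  - by move=> x y; rewrite GD actDr.
  - by move=> r k; rewrite nur_mulA !GE actA.
have [p Gp] := surj G (conj GD GM).
by exists p => k; rewrite /actK -Gp; apply: inj => r; rewrite -GM GE.
Qed.

Lemma cunital_extend : cunital actK -> cunital act.
Proof.
move=> [inj surj]; split=> [p q pqE|G [GD GM]].
  by apply: inj => k; apply: pqE.
have [|p Gp] := surj (fun k => G (f k)).
  by split=> [x y|x y]; rewrite ?fD ?GD ?fM ?GM.
by exists p; apply: lhom_eq_restrict => //; split=> // r s; rewrite actA.
Qed.

End LeftModule.

End RightTunital.

Theorem corollary9p7 (K R : nuRing) (f : K -> R) :
  is_nuhom f ->
  (* f is right t-unital: R is t-unital as a right K-module via f *)
  tunital (fun (r : R) (k : K) => nur_mul R r (f k)) ->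
  (forall (N : zmodType) (act : N -> R -> N), is_rmod act ->
     tunital act <-> tunital (fun (n : N) (k : K) => act n (f k))) /\
  (forall (P : zmodType) (act : R -> P -> P), is_lmod act ->
     cunital act <-> cunital (fun (k : K) (p : P) => act (f k) p)).
Proof.
move=> [fD fM] tunital_f; split=> [N act [aDl aDr aA]|P act [aDr aDl aA]].
  by split; [apply: tunital_restrict | apply: tunital_extend].
by split; [apply: cunital_restrict | apply: cunital_extend].
Qed.
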